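(* Let $H=(V,E)$ be a hypergraph whose vertex set $V$ is a partition of $[n]$ into sets of cardinality at least $2$, and suppose $H$ is downward-closed (for every $e\in E$ and every $e'\subseteq e$ with $|e'|>1$, $e'\in E$). Let $D=\{\bar i_I\}_{I\in V}$ with $\bar i_I\in I$ for each $I\in V$. Then \[\operatorname{aff}\mathrm{MC}^H=\Big\{w\in\mathbb{R}^{\mathcal{J}^H}\ \Big|\ w_J=\mathscr{L}\prod_{\bar i_I\in J\cap D}\Big(1-\sum_{i\in I\setminus\{\bar i_I\}}w_i\Big)\prod_{i\in J\setminus D}w_i\ \ \forall J\in\mathcal{J}^H\setminus\mathcal{J}^H_\le(D)\Big\}.\]
   Context: Let $n$ be a positive integer, $[n]=\{1,\dots,n\}$. A hypergraph $H=(V,E)$ here has as vertex set $V$ a family of pairwise disjoint subsets of $[n]$, each of cardinality at least $2$, and hyperedge set $E$ consisting of subsets $e\subseteq V$ with $|e|\ge 2$. Write $L(V)=\{\{I\}: I\in V\}$. For a nonempty $e\subseteq V$, $\mathcal{J}^e$ denotes the family of sets $J\subseteq \bigcup_{I\in e} I$ with $|J\cap I|=1$ for every $I\in e$. Let $\mathcal{J}^H=\bigcup_{e\in L(V)\cup E}\mathcal{J}^e$. For a vector $w$ indexed by sets, write $w_i=w_{\{i\}}$. Let $\mathscr{S}^H=\{w\in\{0,1\}^{\mathcal{J}^H}: \sum_{i\in I}w_i=1\ \forall I\in V;\ w_J=\prod_{i\in J}w_i\ \forall J\in\mathcal{J}^H, |J|>1\}$, $\mathrm{MC}^H=\operatorname{conv}\mathscr{S}^H$,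 and $\operatorname{aff}$ denotes affine hull. $\mathcal{J}^H_\le(D)=\{J\in\mathcal{J}^H: J\subseteq[n]\setminus D\}$. The linearization operator $\mathscr{L}$ expands the polynomial and replaces each monomial $\prod_{i\in J'}w_i$ ($J'\ne\varnothing$) by the coordinate $w_{J'}$, the empty monomial being the constant $1$; under the hypotheses every such $J'$ lies in $\mathcal{J}^H_\le(D)$, so the right-hand side is an affine function of $w$. *)

From HB Require Import structures.
From mathcomp Require Import all_boot all_order all_algebra.
From mathcomp Require Import mpoly.
Set Implicit Arguments.
Unset Strict Implicit.
Unset Printing Implicit Defensive.
Import Order.TTheory GRing.Theory Num.Theory.
Local Open Scope ring_scope.

(* Convention: [n] = {1,...,n} is represented by the ordinal type 'I_n.
   Vertices of H are sets I : {set 'I_n}; V : {set {set 'I_n}};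
   hyperedges e : {set {set 'I_n}} (subsets of V); E : {set {set {set 'I_n}}}. *)

Section Defs.
Variable n : nat.

Definition Jset (e : {set {set 'I_n}}) : {set {set 'I_n}} :=
  [set J : {set 'I_n} | (J \subset cover e) && [forall I in e, #|J :&: I| == 1%N]].

Definition LV (V : {set {set 'I_n}}) : {set {set {set 'I_n}}} :=
  [set [set I] | I in V].

Definition JH (V : {set {set 'I_n}}) (E : {set {set {set 'I_n}}}) : {set {set 'I_n}} :=
  \bigcup_(e in LV V :|: E) Jset e.

(* index type of the coordinates of R^{J^H} *)
Definition jidx (V : {set {set 'I_n}}) (E : {set {set {set 'I_n}}}) :=
  {J : {set 'I_n} | J \in JH V E}.

Variable R : realFieldType.
Variables (V : {set {set 'I_n}}) (E : {set {set {set 'I_n}}}).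

(* w_J for an arbitrary set J (0 if J is not a coordinate of R^{J^H}) *)
Definition wv (w : jidx V E -> R) (J : {set 'I_n}) : R :=
  if @insub _ (fun J => J \in JH V E) (jidx V E) J is Some j then w j else 0.

Definition SH (w : jidx V E -> R) : Prop :=
  [/\ (forall j, w j = 0 \/ w j = 1),
      (forall I, I \in V -> \sum_(i in I) wv w [set i] = 1) &
      (forall j : jidx V E, (1 < #|val j|)%N -> w j = \prod_(i in val j) wv w [set i])].

End Defs.

Section Hulls.
Variables (R : realFieldType) (T : Type).

Definition conv (A : (T -> R) -> Prop) (w : T -> R) : Prop :=
  exists (k : nat) (c : 'I_k -> R) (p : 'I_k -> T -> R),
    [/\ forall i, A (p i), forall i, 0 <= c i, \sum_i c i = 1 &
        forall t, w t = \sum_i c i * p i t].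

Definition aff (A : (T -> R) -> Prop) (w : T -> R) : Prop :=
  exists (k : nat) (c : 'I_k -> R) (p : 'I_k -> T -> R),
    [/\ forall i, A (p i), \sum_i c i = 1 &
        forall t, w t = \sum_i c i * p i t].
End Hulls.

Definition MC n (R : realFieldType) V E := conv (@SH n R V E).

Section Lin.
Variables (n : nat) (R : realFieldType).
Variables (V : {set {set 'I_n}}) (E : {set {set {set 'I_n}}}).

(* the linearization operator: expand p and replace each monomial
   prod_{i in J'} w_i (J' nonempty) by the coordinate w_{J'}; the empty monomial is 1.
   A monomial m is identified with its support J' = {i | m i > 0}. *)
Definition linz (w : jidx V E -> R) (p : {mpoly R[n]}) : R :=
  \sum_(m <- msupp p)
     mcoeff m p * (if m == mnm0 then 1 else wv w [set i | (0 < m i)%N]).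

Definition Xv (i : 'I_n) : {mpoly R[n]} := mpolyX R (mnm1 i).

Definition Dset (ibar : {set 'I_n} -> 'I_n) : {set 'I_n} := ibar @: V.

Definition rhs_poly (ibar : {set 'I_n} -> 'I_n) (J : {set 'I_n}) : {mpoly R[n]} :=
  (\prod_(I in V | ibar I \in J) (1 - \sum_(i in I :\ ibar I) Xv i)) *
  \prod_(i in J :\: Dset ibar) Xv i.
End Lin.

From HB Require Import structures.
From mathcomp Require Import all_boot all_order all_algebra.
From mathcomp Require Import mpoly.
Set Implicit Arguments.
Unset Strict Implicit.
Unset Printing Implicit Defensive.
Import Order.TTheory GRing.Theory Num.Theory.
Local Open Scope ring_scope.

(* The solutions of the equations form an affine subspace containing S^H, hence
   aff MC^H.  Indeed, write the polynomial as a product over i in J of factors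
   f_i, with f_i = 1 - sum_{k in I \ {i}} w_k when i = ibar_I and f_i = w_i
   otherwise; on S^H every f_i evaluates to w_i, and linearization agrees with
   evaluation on S^H because every monomial is squarefree and supported on a
   set of J^H.  Conversely, the equations determine every coordinate from the
   free ones, the w_J with J disjoint from D.  For T free or empty, the point
   of S^H choosing T in the blocks that T meets and ibar_I in the other blocks
   has free coordinates [J \subset T]; as these indicators are unitriangular,
   any values on the free coordinates, together with the value 1 at T = set0,
   form an affine combination of such points. *)

Local Notation mnm_supp m := [set i | (0 < m i)%N].

Section AffineHulls.
Variables (R : realFieldType) (T : Type).

Definition affine_closed (Q : (T -> R) -> Prop) :=
  forall k (c : 'I_k -> R) (p : 'I_k -> T -> R) (w : T -> R),
    (forall i, Q (p i)) -> \sum_i c i = 1 ->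
    (forall t, w t = \sum_i c i * p i t) -> Q w.

Lemma aff_sub_affine_closed (A Q : (T -> R) -> Prop) :
  affine_closed Q -> (forall x, A x -> Q x) -> forall w, aff A w -> Q w.
Proof. by move=> HQ HA w [k [c [p [Ap Hc Hw]]]]; apply: (HQ k c p) => // i; apply/HA. Qed.

Lemma conv_sub_affine_closed (A Q : (T -> R) -> Prop) :
  affine_closed Q -> (forall x, A x -> Q x) -> forall w, conv A w -> Q w.
Proof. by move=> HQ HA w [k [c [p [Ap _ Hc Hw]]]]; apply: (HQ k c p) => // i; apply/HA. Qed.

Lemma conv_mem (A : (T -> R) -> Prop) x : A x -> conv A x.
Proof.
move=> Ax; exists 1%N, (fun=> 1), (fun=> x).
by split=> [//|_|//|t]; rewrite ?ler01 ?big_ord1 ?mul1r.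
Qed.

Lemma aff_finsum (I : finType) (S : {set I}) (A : (T -> R) -> Prop)
    (c : I -> R) (p : I -> T -> R) (w : T -> R) :
  (forall i, i \in S -> A (p i)) -> \sum_(i in S) c i = 1 ->
  (forall t, w t = \sum_(i in S) c i * p i t) -> aff A w.
Proof.
move=> Ap Hc Hw; exists #|S|, (c \o enum_val), (p \o enum_val).
split=> [i|//|t] /=; first exact/Ap/enum_valP.
  by rewrite -(big_enum_val c).
by rewrite Hw (big_enum_val (fun i => c i * p i t)).
Qed.

End AffineHulls.

Lemma upper_sum_onto (R : zmodType) (T : finType) (F : {set {set T}})
    (W : {set T} -> R) :
  exists c : {set T} -> R, forall K, K \in F -> W K = \sum_(S in F | K \subset S) c S.
Proof.
have [k] := ubnP #|F|; elim: k F W => // k IH F W ltFk.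
have [->|[K0 K0F]] := set_0Vmem F; first by exists (fun=> 0) => K; rewrite inE.
(* a member M of maximal size is contained in no other member *)
have [M /= MF Mmax] := @arg_maxnP _ K0 (fun K => K \in F) (fun K => #|K|) K0F.
pose W' K := W K - (if K \subset M then W M else 0).
have [|c Hc] := IH (F :\ M) W'; first by rewrite (cardsD1 M) MF in ltFk.
exists (fun S => if S == M then W M else c S) => K KF.
rewrite big_mkcondr (big_setD1 M) //= eqxx.
under eq_bigr => S /setD1P [SM _] do rewrite (negPf SM).
rewrite -big_mkcondr; have [->|KM] := eqVneq K M.
  rewrite subxx big_pred0 ?addr0 // => S; rewrite !inE.
  apply/negP => /andP [/andP [SM SF] MS]; move/negP: SM; apply.
  by rewrite eq_sym eqEcard MS Mmax.
by rewrite -Hc ?inE ?KM // addrC subrK.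
Qed.

Lemma prod_mem_subset (R : comNzRingType) (T : finType) (A B : {set T}) :
  \prod_(i in A) (i \in B)%:R = (A \subset B)%:R :> R.
Proof.
have [AB|/subsetPn [i iA iB]] := boolP (A \subset B).
  by rewrite big1 // => i /(subsetP AB) ->.
by rewrite (bigD1 i iA) /= (negbTE iB) mul0r.
Qed.

Lemma sum_mem_card (T : finType) (A B : {set T}) :
  (\sum_(i in A) (i \in B : nat))%N = #|A :&: B|.
Proof.
rewrite -sum1_card (big_setID B) /= [X in (_ + X)%N]big1 ?addn0.
  by apply: eq_bigr => i /setIP [_ ->].
by move=> i /setDP [_ /negPf ->].
Qed.

Section PartialDegrees.
Variables (R : nzRingType) (n : nat).
Implicit Types (p q : {mpoly R[n]}) (b : {set 'I_n} -> nat).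

Lemma card_mnm_supp_le (m : 'X_{1..n}) (S : {set 'I_n}) :
  (#|mnm_supp m :&: S| <= \sum_(i in S) m i)%N.
Proof.
rewrite setIC (big_setID (mnm_supp m)) /= -sum1_card; apply: leq_trans (leq_addr _ _).
by apply: leq_sum => i; rewrite !inE => /andP [].
Qed.

Definition mdeg_on_le b p :=
  all (fun m : 'X_{1..n} => [forall S : {set 'I_n}, \sum_(i in S) m i <= b S]%N) (msupp p).

Lemma mdeg_on_leP b p :
  reflect (forall m, m \in msupp p -> forall S : {set 'I_n}, \sum_(i in S) m i <= b S)%N
          (mdeg_on_le b p).
Proof.
apply: (iffP allP) => [Hp m /Hp /forallP //|Hp m /Hp Hm]; exact/forallP.
Qed.

Lemma mdeg_on_le_trans b b' p :
  mdeg_on_le b p -> (forall S, b S <= b' S)%N -> mdeg_on_le b' p.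
Proof.
move=> /mdeg_on_leP Hp bb'; apply/mdeg_on_leP => m /Hp Hm S.
exact: leq_trans (Hm S) (bb' S).
Qed.

Lemma mdeg_on_le1 b : mdeg_on_le b 1.
Proof.
apply/mdeg_on_leP => m; rewrite msupp1 inE => /eqP -> S.
by rewrite big1 // => i _; rewrite mnm0E.
Qed.

Lemma mdeg_on_leX i : mdeg_on_le (fun S => i \in S : nat) 'X_i.
Proof.
apply/mdeg_on_leP => m; rewrite msuppX inE => /eqP -> S.
rewrite big_mkcond (bigD1 i) //= big1.
  by rewrite mnm1E eqxx addn0; case: (i \in S).
by move=> j ji; rewrite mnm1E eq_sym (negbTE ji); case: (j \in S).
Qed.

Lemma mdeg_on_leB b p q : mdeg_on_le b p -> mdeg_on_le b q -> mdeg_on_le b (p - q).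
Proof.
move=> /mdeg_on_leP Hp /mdeg_on_leP Hq; apply/mdeg_on_leP => m /msuppB_le.
by rewrite mem_cat => /orP [/Hp|/Hq].
Qed.

Lemma mdeg_on_le_sum (I : eqType) (r : seq I) (P : pred I) (F : I -> {mpoly R[n]}) b :
  (forall x, P x -> mdeg_on_le b (F x)) -> mdeg_on_le b (\sum_(x <- r | P x) F x).
Proof.
move=> HF; apply/mdeg_on_leP => m /msupp_sum_le /flattenP [s /mapP [x]].
by rewrite mem_filter => /andP [/HF /mdeg_on_leP Hx _] ->; apply: Hx.
Qed.

Lemma mdeg_on_leM b1 b2 p q : mdeg_on_le b1 p -> mdeg_on_le b2 q ->
  mdeg_on_le (fun S => b1 S + b2 S)%N (p * q).
Proof.
move=> /mdeg_on_leP Hp /mdeg_on_leP Hq; apply/mdeg_on_leP.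
move=> m /msuppM_le /allpairsP [[m1 m2] /= [/Hp H1 /Hq H2 ->]] S.
by rewrite (eq_bigr _ (fun i _ => mnmDE i m1 m2)) big_split leq_add.
Qed.

Lemma mdeg_on_le_prod (I : Type) (r : seq I) (P : pred I) (F : I -> {mpoly R[n]})
    (b : I -> {set 'I_n} -> nat) :
  (forall x, P x -> mdeg_on_le (b x) (F x)) ->
  mdeg_on_le (fun S => \sum_(x <- r | P x) b x S)%N (\prod_(x <- r | P x) F x).
Proof.
move=> HF; elim: r => [|x r IH]; first by rewrite big_nil; apply: mdeg_on_le1.
rewrite big_cons; case: ifP => Px.
  by apply: mdeg_on_le_trans (mdeg_on_leM (HF x Px) IH) _ => S; rewrite big_cons Px.
by apply: mdeg_on_le_trans IH _ => S; rewrite big_cons Px.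
Qed.

End PartialDegrees.

Section AffineHullMC.
Variables (R : realFieldType) (n : nat)
  (V : {set {set 'I_n}}) (E : {set {set {set 'I_n}}}) (ibar : {set 'I_n} -> 'I_n).
Hypotheses (HVpart : partition V [set: 'I_n])
  (HEsub : forall e : {set {set 'I_n}}, e \in E -> e \subset V)
  (HEcard : forall e : {set {set 'I_n}}, e \in E -> (2 <= #|e|)%N)
  (HEdown : forall e e' : {set {set 'I_n}},
     e \in E -> e' \subset e -> (1 < #|e'|)%N -> e' \in E)
  (Hibar : forall I : {set 'I_n}, I \in V -> ibar I \in I).

Local Notation D := (Dset V ibar).
Local Notation JHs := (JH V E).
Local Notation jt := (jidx V E).
Local Notation blk := (pblock V).

Implicit Types (e : {set {set 'I_n}}) (I J K T : {set 'I_n}) (i k : 'I_n) (j : jt).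

Lemma pblockE I i : I \in V -> i \in I -> blk i = I.
Proof. by case/and3P: HVpart => _ triv _; apply: def_pblock. Qed.

Lemma mem_pblockV i : i \in blk i.
Proof. by case/and3P: HVpart => /eqP cov _ _; rewrite mem_pblock cov inE. Qed.

Lemma pblock_V i : blk i \in V.
Proof. by case/and3P: HVpart => /eqP cov _ _; rewrite pblock_mem // cov inE. Qed.

Lemma pblock_ibar I : I \in V -> blk (ibar I) = I.
Proof. by move=> IV; apply: pblockE IV (Hibar IV). Qed.

Lemma ibar_D I : I \in V -> ibar I \in D.
Proof. exact: imset_f. Qed.

Lemma mem_D i : (i \in D) = (i == ibar (blk i)).
Proof.
apply/imsetP/eqP => [[I IV ->]|->]; first by rewrite pblock_ibar.
by exists (blk i); rewrite ?pblock_V.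
Qed.

Lemma edge_sub e : e \in LV V :|: E -> e \subset V.
Proof. by case/setUP => [/imsetP [I IV ->]|/HEsub //]; rewrite sub1set. Qed.

Lemma JsetP e K :
  reflect (K \subset cover e /\ forall I, I \in e -> #|K :&: I| = 1%N) (K \in Jset e).
Proof.
rewrite inE; apply: (iffP andP) => [[Ke /forall_inP HK]|[Ke HK]].
  by split=> // I /HK /eqP.
by split=> //; apply/forall_inP => I /HK ->.
Qed.

Lemma pblock_cover e K i : e \subset V -> K \subset cover e -> i \in K -> blk i \in e.
Proof.
move=> eV /subsetP Ke /Ke /bigcupP [I Ie iI].
by rewrite (pblockE (subsetP eV _ Ie) iI).
Qed.

Lemma JH_le1 K I : K \in JHs -> I \in V -> (#|K :&: I| <= 1)%N.
Proof.
case/bigcupP => e He /JsetP [Ke HK] IV; have [/HK -> //|Ie] := boolP (I \in e).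
rewrite leqW // leqn0 cards_eq0; apply/eqP/setP => i; rewrite !inE.
apply/andP => -[iK iI]; move: (pblock_cover (edge_sub He) Ke iK).
by rewrite (pblockE IV iI) (negbTE Ie).
Qed.

Lemma JH_neq0 K : K \in JHs -> K != set0.
Proof.
case/bigcupP => e He /JsetP [_ HK].
have /set0Pn [I /HK] : e != set0.
  case/setUP: He => [/imsetP [I _ ->]|/HEcard]; first by apply/set0Pn; exists I; rewrite inE.
  by apply: contraTneq => ->; rewrite cards0.
by move/eqP; apply: contraTneq => ->; rewrite set0I cards0.
Qed.

Lemma JH_set1 i : [set i] \in JHs.
Proof.
apply/bigcupP; exists [set blk i]; first by rewrite inE imset_f ?pblock_V.
apply/JsetP; split=> [|I]; first by rewrite /cover big_set1 sub1set mem_pblockV.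
by rewrite inE => /eqP ->; rewrite (setIidPl _) ?cards1 // sub1set mem_pblockV.
Qed.

Lemma JH_dominated J K : J \in JHs -> K != set0 ->
  (forall I, I \in V -> #|K :&: I| <= #|J :&: I|)%N -> K \in JHs.
Proof.
move=> JJ Kn0 KJ; case/bigcupP: (JJ) => e He /JsetP [Je _].
pose e' := blk @: K.
have e'e : e' \subset e.
  apply/subsetP => _ /imsetP [i iK ->].
  have : (0 < #|J :&: blk i|)%N.
    apply: leq_trans (KJ _ (pblock_V i)); rewrite card_gt0.
    by apply/set0Pn; exists i; rewrite inE iK mem_pblockV.
  case/card_gt0P => j /setIP [jJ ji]; rewrite -(pblockE (pblock_V i) ji).
  exact: pblock_cover (edge_sub He) Je jJ.
have Ke' : K \in Jset e'.
  apply/JsetP; split.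
    by apply/subsetP => i iK; apply/bigcupP; exists (blk i); rewrite ?imset_f ?mem_pblockV.
  move=> _ /imsetP [i iK ->]; apply/eqP.
  rewrite eqn_leq (leq_trans (KJ _ (pblock_V i))) ?JH_le1 ?pblock_V //.
  by rewrite card_gt0; apply/set0Pn; exists i; rewrite inE iK mem_pblockV.
apply/bigcupP; exists e' => //; apply/setUP.
have [e'gt1|e'le1] := ltnP 1 #|e'|.
  right; case/setUP: He => [/imsetP [I0 _ eI0]|eE]; last exact: HEdown eE e'e e'gt1.
  by move: (subset_leq_card e'e); rewrite eI0 cards1 leqNgt e'gt1.
left; have /cards1P [I0 eI0] : #|e'| == 1%N.
  by rewrite eqn_leq e'le1 card_gt0 imset_eq0 Kn0.
apply/imsetP; exists I0 => //.
by apply: (subsetP (edge_sub He)); apply: (subsetP e'e); rewrite eI0 set11.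
Qed.

Lemma wv_in (w : jt -> R) K (KJ : K \in JHs) : wv w K = w (Sub K KJ).
Proof. by rewrite /wv insubT. Qed.

Lemma wv_out (w : jt -> R) K : K \notin JHs -> wv w K = 0.
Proof. by move=> KJ; rewrite /wv insubN. Qed.

Lemma wv_val (w : jt -> R) j : wv w (val j) = w j.
Proof. by rewrite /wv valK. Qed.

Lemma wv_affine l (c : 'I_l -> R) (p : 'I_l -> jt -> R) (w : jt -> R) :
  (forall t, w t = \sum_i c i * p i t) -> forall K, wv w K = \sum_i c i * wv (p i) K.
Proof.
move=> Hw K; have [KJ|KJ] := boolP (K \in JHs).
  by rewrite (wv_in _ KJ) Hw; apply: eq_bigr => i _; rewrite (wv_in _ KJ).
by rewrite wv_out // big1 // => i _; rewrite wv_out // mulr0.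
Qed.

Lemma linz_affine l (c : 'I_l -> R) (p : 'I_l -> jt -> R) (w : jt -> R) q :
  \sum_i c i = 1 -> (forall t, w t = \sum_i c i * p i t) ->
  linz w q = \sum_i c i * linz (p i) q.
Proof.
move=> Hc Hw; rewrite /linz.
under [RHS]eq_bigr => i _ do rewrite big_distrr.
rewrite exchange_big /=; apply: eq_bigr => m _.
under eq_bigr => i _ do rewrite mulrCA.
rewrite -big_distrr /=; congr (_ * _).
case: eqP => _; last exact: wv_affine.
by under eq_bigr => i _ do rewrite mulr1; rewrite Hc.
Qed.

Lemma SH_wv_prod (x : jt -> R) K : SH x -> K \in JHs ->
  wv x K = \prod_(i in K) wv x [set i].
Proof.
case=> _ _ Hprod KJ; have [Kgt1|Kle1] := ltnP 1 #|K|.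
  by rewrite (wv_in _ KJ); exact: (Hprod (Sub K KJ)).
have /cards1P [i ->] : #|K| == 1%N by rewrite eqn_leq Kle1 card_gt0 JH_neq0.
by rewrite big_set1.
Qed.

Lemma linz_SH (x : jt -> R) q : SH x ->
  (forall m, m \in msupp q -> forall i, (m i <= 1)%N) ->
  (forall m, m \in msupp q -> mnm_supp m != set0 -> mnm_supp m \in JHs) ->
  linz x q = q.@[fun i => wv x [set i]].
Proof.
move=> Hx Hle1 HJ; rewrite mevalE /linz; apply: eq_big_seq => m Hm; congr (_ * _).
case: eqP => [->|m_neq0]; first by rewrite big1 // => i _; rewrite mnm0E expr0.
have Kn0 : mnm_supp m != set0.
  apply: contra_not_neq m_neq0 => K0; apply/mnmP => i; rewrite mnm0E.
  by have := in_set0 i; rewrite -K0 inE => /negbT; rewrite -eqn0Ngt => /eqP.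
rewrite (SH_wv_prod Hx (HJ m Hm Kn0)) big_mkcond /=; apply: eq_bigr => i _; rewrite inE.
have [->|mi_gt0] := posnP (m i); first by rewrite expr0.
by have /eqP -> : m i == 1%N by rewrite eqn_leq Hle1.
Qed.

Definition block_factor i : {mpoly R[n]} :=
  if i \in D then 1 - \sum_(k in blk i :\ i) 'X_k else 'X_i.

Lemma rhs_polyE J : rhs_poly R V ibar J = \prod_(i in J) block_factor i.
Proof.
rewrite /rhs_poly [RHS](big_setID D) /=; congr (_ * _); last first.
  by apply: eq_bigr => i /setDP [_ /negPf iD]; rewrite /block_factor iD.
have -> : J :&: D = ibar @: [set I in V | ibar I \in J].
  apply/setP => i; rewrite inE; apply/andP/imsetP => [[iJ /imsetP [I IV iI]]|[I]].
    by exists I; rewrite // inE IV -iI.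
  by rewrite inE => /andP [IV iJ] ->; rewrite iJ ibar_D.
rewrite big_imset /=; last first.
  move=> I1 I2; rewrite !inE => /andP [IV1 _] /andP [IV2 _] eq12.
  by rewrite -(pblock_ibar IV1) eq12 pblock_ibar.
apply: eq_big => [I|I /andP [IV _]]; first by rewrite inE.
by rewrite /block_factor ibar_D // pblock_ibar.
Qed.

Lemma block_factor_SH (x : jt -> R) i : SH x ->
  (block_factor i).@[fun k => wv x [set k]] = wv x [set i].
Proof.
case=> _ Hsum _; rewrite /block_factor; case: ifP => _; last exact: mevalXU.
rewrite mevalB meval1 (raddf_sum (meval _)) (eq_bigr _ (fun k _ => mevalXU _ k)).
by rewrite -(Hsum _ (pblock_V i)) (big_setD1 i) ?mem_pblockV //= addrK.
Qed.

Lemma block_factor_deg i :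
  mdeg_on_le (fun S => (S :&: blk i :\: D != set0 : nat)) (block_factor i).
Proof.
have deg_X k : k \in blk i -> k \notin D ->
    mdeg_on_le (fun S => (S :&: blk i :\: D != set0 : nat)) ('X_k : {mpoly R[n]}).
  move=> ki kD; apply: mdeg_on_le_trans (mdeg_on_leX _ k) _ => S.
  case kS : (k \in S) => //; rewrite lt0b; apply/set0Pn; exists k.
  by rewrite !inE kS ki kD.
rewrite /block_factor; case: ifP => [iD|/negbT iD]; last exact: deg_X (mem_pblockV i) iD.
apply: mdeg_on_leB; first exact: mdeg_on_le1.
apply: mdeg_on_le_sum => k /setD1P [k_neq_i kblk].
have kD : k \notin D by move: iD; rewrite !mem_D (pblockE (pblock_V i) kblk) => /eqP <-.
exact: deg_X kblk kD.
Qed.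

Lemma rhs_poly_deg J : mdeg_on_le
  (fun S => \sum_(i in J) (S :&: blk i :\: D != set0 : nat))%N (rhs_poly R V ibar J).
Proof. by rewrite rhs_polyE; apply: mdeg_on_le_prod => i _; apply: block_factor_deg. Qed.

Lemma rhs_poly_mono_block J m I : m \in msupp (rhs_poly R V ibar J) -> I \in V ->
  (\sum_(i in I) m i <= #|J :&: I|)%N.
Proof.
have /mdeg_on_leP Hdeg := rhs_poly_deg J.
move=> /Hdeg /(_ I) Hm IV; apply: leq_trans Hm _; rewrite -sum_mem_card.
apply: leq_sum => j _; case: set0Pn => [[x]|//]; rewrite !inE => /andP [_ /andP [xI xj]].
by rewrite -(pblockE IV xI) (pblockE (pblock_V j) xj) mem_pblockV.
Qed.

Lemma rhs_poly_mono_free J m : m \in msupp (rhs_poly R V ibar J) ->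
  mnm_supp m \subset ~: D.
Proof.
have /mdeg_on_leP Hdeg := rhs_poly_deg J.
move=> /Hdeg Hm; apply/subsetP => k; rewrite !inE; apply: contraTN => kD.
rewrite -leqNgt; have := Hm [set k]; rewrite big_set1 => /leq_trans; apply.
rewrite leqn0 big1 // => i _; apply/eqP; rewrite eqb0 negbK; apply/eqP/setP => y.
by rewrite !inE; case: eqP => [->|]; rewrite ?kD ?andbF.
Qed.

Lemma rhs_poly_mono_le1 J m : J \in JHs -> m \in msupp (rhs_poly R V ibar J) ->
  forall i, (m i <= 1)%N.
Proof.
move=> JJ Hm i; apply: leq_trans (JH_le1 JJ (pblock_V i)).
apply: leq_trans (rhs_poly_mono_block Hm (pblock_V i)).
by rewrite (big_setD1 i) ?mem_pblockV //= leq_addr.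
Qed.

Lemma rhs_poly_mono_JH J m : J \in JHs -> m \in msupp (rhs_poly R V ibar J) ->
  mnm_supp m != set0 -> mnm_supp m \in JHs.
Proof.
move=> JJ Hm Kn0; apply: JH_dominated JJ Kn0 _ => I IV.
exact: leq_trans (card_mnm_supp_le m I) (rhs_poly_mono_block Hm IV).
Qed.

Lemma SH_rhs (x : jt -> R) j : SH x -> x j = linz x (rhs_poly R V ibar (val j)).
Proof.
move=> Hx; rewrite linz_SH // => [|m|m]; last 2 first.
- exact: rhs_poly_mono_le1 (valP j).
- exact: rhs_poly_mono_JH (valP j).
rewrite rhs_polyE rmorph_prod (eq_bigr _ (fun i _ => block_factor_SH i Hx)).
by rewrite -SH_wv_prod ?wv_val // (valP j).
Qed.

Definition coord_eqs (w : jt -> R) := forall j : jt, ~~ (val j \subset ~: D) ->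
  w j = linz w (rhs_poly R V ibar (val j)).

Lemma coord_eqs_affine_closed : affine_closed coord_eqs.
Proof.
move=> l c p w Hp Hc Hw j jD; rewrite Hw (linz_affine _ Hc Hw).
by apply: eq_bigr => i _; rewrite -Hp.
Qed.

Lemma aff_MC_coord_eqs w : aff (@MC n R V E) w -> coord_eqs w.
Proof.
have SH_eqs x : SH x -> coord_eqs x by move=> Hx j _; apply: SH_rhs.
have MC_eqs := conv_sub_affine_closed coord_eqs_affine_closed SH_eqs.
by move/(aff_sub_affine_closed coord_eqs_affine_closed MC_eqs).
Qed.

Definition free_sets :=
  [set T : {set 'I_n} | (T \subset ~: D) && ((T == set0) || (T \in JHs))].

Definition completion T := T :|: [set ibar I | I in [set I in V | [disjoint I & T]]].

Definition vertex T : jt -> R := fun j : jt => (val j \subset completion T)%:R.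

Lemma mem_completion T I i : I \in V -> i \in I ->
  (i \in completion T) = (i \in T) || [disjoint I & T] && (i == ibar I).
Proof.
move=> IV iI; rewrite inE; congr (_ || _).
apply/imsetP/andP => [[I' ] | [dIT /eqP ->]]; last by exists I; rewrite // inE IV dIT.
rewrite inE => /andP [I'V dI'T] iI'.
have <- : I' = I by rewrite -(pblockE IV iI) iI' pblock_ibar.
by rewrite dI'T iI'.
Qed.

Lemma completion_block T I : T \in free_sets -> I \in V ->
  exists a, I :&: completion T = [set a].
Proof.
rewrite inE => /andP [_ T0] IV.
have ITle1 : (#|I :&: T| <= 1)%N.
  by case/orP: T0 => [/eqP ->|TJ]; rewrite ?setI0 ?cards0 // setIC JH_le1.
have [dIT|dIT] := boolP [disjoint I & T].
  exists (ibar I); apply/setP => i; rewrite in_setI in_set1.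
  have [iI|iI] := boolP (i \in I); last first.
    by apply/esym/negbTE; apply: contraNneq iI => ->; apply: Hibar.
  by rewrite (mem_completion _ IV iI) dIT (disjointFr dIT iI).
have /card_gt0P [a aIT] : (0 < #|I :&: T|)%N by rewrite card_gt0 setI_eq0.
exists a; apply/setP => i; rewrite in_setI in_set1.
have [iI|iI] := boolP (i \in I); last first.
  by apply/esym/negbTE; apply: contraNneq iI => ->; case/setIP: aIT.
rewrite (mem_completion _ IV iI) (negbTE dIT) orbF.
apply/idP/eqP => [iT|->]; last by case/setIP: aIT.
have /card_le1_eqP eqIT := ITle1.
by apply: eqIT; rewrite // inE iI.
Qed.

Lemma wv_vertex T i : wv (vertex T) [set i] = (i \in completion T)%:R.
Proof. by rewrite (wv_in _ (JH_set1 i)) /vertex /= sub1set. Qed.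

Lemma SH_vertex T : T \in free_sets -> SH (vertex T).
Proof.
move=> TF; split=> [j|I IV|j _].
- by rewrite /vertex; case: (_ \subset _); [right|left].
- have [a Ia] := completion_block TF IV.
  under eq_bigr => i _ do rewrite wv_vertex.
  by rewrite -natr_sum sum_mem_card Ia cards1.
- under eq_bigr => i _ do rewrite wv_vertex.
  by rewrite prod_mem_subset.
Qed.

Lemma vertex_free T j : val j \subset ~: D -> vertex T j = (val j \subset T)%:R.
Proof.
move=> jD; rewrite /vertex; congr (nat_of_bool _)%:R.
apply/idP/idP => [jC|jT]; last exact: subset_trans jT (subsetUl _ _).
apply/subsetP => k kj; move: (subsetP jC k kj); rewrite inE => /orP [//|/imsetP [I]].
rewrite inE => /andP [IV _] kI; move: (subsetP jD k kj).
by rewrite inE kI ibar_D.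
Qed.

Lemma free_coords_decomposition (w : jt -> R) : exists c : {set 'I_n} -> R,
  \sum_(T in free_sets) c T = 1 /\
  forall j : jt, val j \subset ~: D -> w j = \sum_(T in free_sets) c T * vertex T j.
Proof.
have [c Hc] := upper_sum_onto free_sets (fun K => if K == set0 then 1 else wv w K).
have F0 : set0 \in free_sets by rewrite inE sub0set eqxx.
exists c; split.
  by have := Hc set0 F0; rewrite eqxx => ->; apply: eq_bigl => T; rewrite sub0set andbT.
move=> j jD; have jF : val j \in free_sets by rewrite inE jD (valP j) orbT.
have := Hc _ jF; rewrite (negbTE (JH_neq0 (valP j))) wv_val => ->.
rewrite big_mkcondr; apply: eq_bigr => T _; rewrite vertex_free //.
by case: (_ \subset _); rewrite ?mulr1 ?mulr0.
Qed.

Lemma coord_eqs_determined (w w' : jt -> R) : coord_eqs w -> coord_eqs w' ->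
  (forall j : jt, val j \subset ~: D -> w j = w' j) -> forall j, w j = w' j.
Proof.
move=> Hw Hw' Hfree j; have [jD|jD] := boolP (val j \subset ~: D); first exact: Hfree.
rewrite Hw // Hw' // /linz; apply: eq_big_seq => m Hm; congr (_ * _).
case: eqP => // _; have [KJ|KJ] := boolP (mnm_supp m \in JHs); last by rewrite !wv_out.
by rewrite !(wv_in _ KJ) Hfree // (rhs_poly_mono_free Hm).
Qed.

Lemma coord_eqs_aff_MC w : coord_eqs w -> aff (@MC n R V E) w.
Proof.
move=> Hw; have [c [Hc1 Hfree]] := free_coords_decomposition w.
pose w' t := \sum_(T in free_sets) c T * vertex T t.
have MC_vertex T : T \in free_sets -> @MC n R V E (vertex T).
  by move=> /SH_vertex; apply: conv_mem.
have Hw' : aff (@MC n R V E) w' by apply: aff_finsum MC_vertex Hc1 _.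
have Hww' := coord_eqs_determined Hw (aff_MC_coord_eqs Hw') Hfree.
exact: aff_finsum MC_vertex Hc1 Hww'.
Qed.

End AffineHullMC.

Theorem theorem3p6 (R : realFieldType) (n : nat)
  (V : {set {set 'I_n}}) (E : {set {set {set 'I_n}}})
  (ibar : {set 'I_n} -> 'I_n)
  (HVpart : partition V [set: 'I_n])
  (HVcard : forall I : {set 'I_n}, I \in V -> (2 <= #|I|)%N)
  (HEsub : forall e : {set {set 'I_n}}, e \in E -> e \subset V)
  (HEcard : forall e : {set {set 'I_n}}, e \in E -> (2 <= #|e|)%N)
  (HEdown : forall e e' : {set {set 'I_n}}, e \in E -> e' \subset e -> (1 < #|e'|)%N -> e' \in E)
  (Hibar : forall I : {set 'I_n}, I \in V -> ibar I \in I) :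
  forall w : jidx V E -> R,
    aff (@MC n R V E) w <->
    (forall j : jidx V E, ~~ (val j \subset ~: @Dset n V ibar) ->
       w j = @linz n R V E w (@rhs_poly n R V ibar (val j))).
Proof.
move=> w; split.
- exact: aff_MC_coord_eqs.
- exact: coord_eqs_aff_MC.
Qed.
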